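(* Let $(\Delta,\mathcal H)$ be a generic cut with associated simplicial complexes $K_\Delta,K_+,K_-$ on $\widetilde{[m]}=[m]\cup\{o\}$, and let $Z=\{\sigma\subset\widetilde{[m]}: F_\sigma\neq\varnothing\text{ and }F_\sigma\subset\Delta_+\setminus H_o\}$ where $F_\sigma=\bigcap_{i\in\sigma}H_i$. Then $K_-$ is the strong connected sum $K_+\#^ZK_\Delta$.
   Context: Let $\Delta\subset\mathbb R^n$ be an $n$-dimensional simple polytope $\Delta=\{x:\langle x,\lambda_i\rangle+\eta_i\ge0,\ i=1,\dots,m\}$ whose facets $H_i=\Delta\cap\{\langle x,\lambda_i\rangle+\eta_i=0\}$ are all nonempty. A generic cut is a hyperplane $\mathcal H=\{\langle x,\lambda_0\rangle+\xi=0\}$ in general position with the hyperplanes $\{\langle x,\lambda_i\rangle+\eta_i=0\}$ and with $H_o:=\mathcal H\cap\Delta\neq\varnothing$ (the facet indexed by $o$). Set $\Delta_\pm=\Delta\cap\{\pm(\langle x,\lambda_0\rangle+\xi)\ge0\}$, $K_\Delta=\{\sigma\subset[m]:\bigcap_{i\in\sigma}H_i\ne\varnothing\}\cup\{\varnothing\}$, $K_\pm=\{\sigma\subset\widetilde{[m]}:\bigcap_{i\in\sigma}(H_i\cap\Delta_\pm)\ne\varnothing\}\cup\{\varnothing\}$. Simplicial-complex notation: for $Z\subset K$, $\overline Z$ is the smallest subcomplex containing $Z$; $O_K(Z)=\{\sigma\in K:\sigma\supseteq\tau$ for some $\tau\in Z\}$; $\operatorname{Del}_Z(K)=K\setminus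 O_K(Z)$; pure means all maximal faces have the same dimension. Connected sum: for simplicial complexes $K_1,K_2$ on the same vertex set and $Z\subset K_1\cap K_2$ with $\varnothing\notin Z$ and $O_{K_1\cup K_2}(Z)\subset K_1\cap K_2$, $K_1\#^ZK_2:=\operatorname{Del}_Z(K_1\cup K_2)$. It is strong if $K_1,K_2,W:=K_1\cap K_2$ are pure of the same dimension and $Z=W\setminus\overline{K_1\setminus W}=W\setminus\overline{K_2\setminus W}$. *)

From HB Require Import structures.
From mathcomp Require Import all_boot all_order all_algebra.
From mathcomp Require Import reals.
Set Implicit Arguments. Unset Strict Implicit. Unset Printing Implicit Defensive.
Import Order.TTheory GRing.Theory Num.Theory.
Local Open Scope ring_scope.

Section Complexes.
Variable T : finType.
Definition complex := {set T} -> Prop.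

Definition starO (K Z : complex) : complex :=
  fun s => K s /\ exists t, Z t /\ t \subset s.
Definition Del (Z K : complex) : complex := fun s => K s /\ ~ starO K Z s.
(* smallest subcomplex containing Z (complexes always contain the empty face) *)
Definition closure (Z : complex) : complex :=
  fun s => s = set0 \/ exists t, Z t /\ s \subset t.
Definition cunion (K1 K2 : complex) : complex := fun s => K1 s \/ K2 s.
Definition cinter (K1 K2 : complex) : complex := fun s => K1 s /\ K2 s.
Definition cdiff (K1 K2 : complex) : complex := fun s => K1 s /\ ~ K2 s.
Definition maximal_face (K : complex) (s : {set T}) :=
  K s /\ forall t, K t -> s \subset t -> t = s.
(* all maximal faces have c vertices, i.e. dimension c - 1 *)
Definition pure_card (K : complex) (c : nat) :=
  forall s, maximal_face K s -> #|s| = c.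

Definition connected_sum (K1 K2 Z K : complex) :=
  [/\ (forall s, Z s -> K1 s /\ K2 s),
      ~ Z set0,
      (forall s, starO (cunion K1 K2) Z s -> K1 s /\ K2 s) &
      (forall s, K s <-> Del Z (cunion K1 K2) s)].

Definition strong_connected_sum (K1 K2 Z K : complex) :=
  let W := cinter K1 K2 in
  [/\ connected_sum K1 K2 Z K,
      (exists c, [/\ pure_card K1 c, pure_card K2 c & pure_card W c]),
      (forall s, Z s <-> (W s /\ ~ closure (cdiff K1 W) s)) &
      (forall s, Z s <-> (W s /\ ~ closure (cdiff K2 W) s))].
End Complexes.

Section Geometry.
Variables (R : realType) (n : nat).
Local Notation pt := 'rV[R]_n.

Definition dot (x y : pt) : R := \sum_(j < n) x 0 j * y 0 j.

Definition aff_indep k (p : 'I_k -> pt) :=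
  forall c : 'I_k -> R, \sum_i c i = 0 -> \sum_i c i *: p i = 0 ->
    forall i, c i = 0.

(* affine dimension of a subset of R^n (the empty set has dimension -1) *)
Definition affdim (S : pt -> Prop) (d : int) : Prop :=
  match d with
  | Posz k => (exists p : 'I_k.+1 -> pt, (forall i, S (p i)) /\ aff_indep p) /\
              ~ (exists p : 'I_k.+2 -> pt, (forall i, S (p i)) /\ aff_indep p)
  | Negz 0 => forall x, ~ S x
  | Negz _ => False
  end.

Variables (m : nat) (lam : 'I_m -> pt) (eta : 'I_m -> R)
          (lam0 : pt) (xi : R).

Definition Delta (x : pt) := forall i, 0 <= dot x (lam i) + eta i.

Definition hypm (j : 'I_m) (x : pt) := dot x (lam j) + eta j = 0.
Definition facetm (j : 'I_m) (x : pt) := Delta x /\ hypm j x.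

(* hyperplanes indexed by [m]~ = option 'I_m, None standing for o *)
Definition hyp (i : option 'I_m) (x : pt) :=
  match i with
  | Some j => hypm j x
  | None => dot x lam0 + xi = 0
  end.

Definition facet (i : option 'I_m) (x : pt) := Delta x /\ hyp i x.

Definition Dpm (b : bool) (x : pt) :=
  Delta x /\ (if b then 0 <= dot x lam0 + xi else dot x lam0 + xi <= 0).

Definition vertex (v : pt) :=
  Delta v /\ forall a b (t : R), Delta a -> Delta b -> 0 < t -> t < 1 ->
    v = t *: a + (1 - t) *: b -> a = v.

(* Delta is an n-dimensional simple polytope whose facets are the
   (pairwise distinct, nonempty) H_1, ..., H_m *)
Definition simple_polytope :=
  [/\ (exists M : R, forall x, Delta x -> forall j, `|x 0 j| <= M),
      affdim Delta n,
      (forall i, affdim (facetm i) (n%:Z - 1)),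
      (forall i j, i <> j -> ~ (forall x, facetm i x <-> facetm j x)) &
      (forall v, vertex v ->
         exists S : {set 'I_m}, #|S| = n /\ forall i, i \in S <-> hypm i v)].

Definition Lsub (s : {set 'I_m}) (x : pt) := forall i, i \in s -> hypm i x.

Definition generic_cut :=
  [/\ lam0 != 0,
      (forall (s : {set 'I_m}) (d : int), (exists x, Lsub s x) ->
         affdim (Lsub s) d ->
         affdim (fun x => Lsub s x /\ hyp None x) (d - 1)) &
      (exists x, facet None x)].

Definition KDelta : complex (option 'I_m) :=
  fun s => None \notin s /\
           (s = set0 \/ exists x, forall i, i \in s -> facet i x).

Definition Kpm (b : bool) : complex (option 'I_m) :=
  fun s => s = set0 \/ exists x, Dpm b x /\ forall i, i \in s -> facet i x.

Definition Fsig (s : {set option 'I_m}) (x : pt) :=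
  Delta x /\ forall i, i \in s -> hyp i x.

Definition Zcut : complex (option 'I_m) :=
  fun s => (exists x, Fsig s x) /\
           (forall x, Fsig s x -> Dpm true x /\ ~ facet None x).
End Geometry.

(* Record, for each point x of Delta, the set ctight x of facets of the cut
   polytope through x; every face of K_Delta, K_+ and K_- lies in such a set.
   A face of K_+ u K_Delta misses K_- exactly when all its points lie strictly
   above the cut, i.e. when it contains a face of Z; this is K_- = Del_Z.
   The faces of W outside Z lie either in o u sigma with F_sigma meeting H_o
   (a face of K_+ only), or in the facet set of a vertex below the cut (a face
   of K_Delta only). For purity, moving along a direction orthogonal to the
   tight normals, in the sense where the cut value does not decrease, strictly
   enlarges the tight set; hence maximal faces come from vertices, which lie on
   n facets and off the cut by genericity, or from points of H_o on n - 1
   facets. *)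
From Pilot Require Import Defs.
From HB Require Import structures.
From mathcomp Require Import all_boot all_order all_algebra.
From mathcomp Require Import reals.
From Stdlib Require Import Classical.
From mathcomp Require Import ring lra.
Set Implicit Arguments. Unset Strict Implicit. Unset Printing Implicit Defensive.
Import Order.TTheory GRing.Theory Num.Theory.
Local Open Scope ring_scope.

Section Dot.
Variables (R : realType) (n : nat).
Local Notation pt := 'rV[R]_n.

Lemma dotDl (a b c : pt) : dot (a + b) c = dot a c + dot b c.
Proof. by rewrite /dot -big_split; apply: eq_bigr => i _; rewrite mxE mulrDl. Qed.

Lemma dotZl k (a c : pt) : dot (k *: a) c = k * dot a c.
Proof. by rewrite /dot mulr_sumr; apply: eq_bigr => i _; rewrite mxE mulrA. Qed.

Lemma dotNl (a c : pt) : dot (- a) c = - dot a c.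
Proof. by rewrite -scaleN1r dotZl mulN1r. Qed.

Lemma dotBl (a b c : pt) : dot (a - b) c = dot a c - dot b c.
Proof. by rewrite dotDl dotNl. Qed.

Lemma dot0l (c : pt) : dot 0 c = 0.
Proof. by rewrite -(scale0r 0) dotZl mul0r. Qed.

Lemma dim_le_of_orthogonal_trivial k (w : 'I_k -> pt) :
  (forall u : pt, (forall i, dot u (w i) = 0) -> u = 0) -> (n <= k)%N.
Proof.
move=> orth0; rewrite leqNgt; apply/negP => ltkn.
pose M : 'M[R]_(n, k) := \matrix_(j, i) w i 0 j.
have : kermx M != 0.
  rewrite kermx_eq0 /row_free; apply/negP => /eqP rkM.
  by move: (rank_leq_col M); rewrite rkM leqNgt ltkn.
case/rowV0Pn => v /sub_kermxP vM; apply/negP; rewrite negbK; apply/eqP/orth0 => i.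
have := congr1 (fun A : 'M[R]_(1, k) => A 0 i) vM; rewrite !mxE => <-.
by apply: eq_bigr => j _; rewrite mxE.
Qed.

Lemma affdim_singleton (S : pt -> Prop) p : (forall z, S z <-> z = p) -> affdim S 0.
Proof.
move=> Sp; split.
  exists (fun _ => p); split; first by move=> i; apply/Sp.
  by move=> c; rewrite big_ord1 => c0 _ i; rewrite (ord1 i).
case=> q [Sq indep_q].
pose c (i : 'I_2) : R := if i == ord0 then 1 else -1.
have /eqP : (1 : R) = 0.
  apply: (indep_q c _ _ ord0); first by rewrite big_ord_recl big_ord1 /c /=; lra.
  by rewrite big_ord_recl big_ord1 /c /= !(proj1 (Sp _) (Sq _)) scaleN1r scale1r subrr.
by rewrite oner_eq0.
Qed.
End Dot.

Section Polytope.
Variables (R : realType) (n m : nat) (lam : 'I_m -> 'rV[R]_n) (eta : 'I_m -> R).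
Local Notation pt := 'rV[R]_n.
Local Notation Dl := (Delta lam eta).

Definition slack i (x : pt) := dot x (lam i) + eta i.
Definition tight (x : pt) : {set 'I_m} := [set i | slack i x == 0].
Definition orth (u : pt) (S : {set 'I_m}) := forall i, i \in S -> dot u (lam i) = 0.

Lemma in_tight i x : (i \in tight x) = (slack i x == 0).
Proof. by rewrite inE. Qed.

Lemma slack_translate i (x u : pt) s : slack i (x + s *: u) = slack i x + s * dot u (lam i).
Proof. by rewrite /slack dotDl dotZl; lra. Qed.

Lemma slack_convex i (a b : pt) t :
  slack i (t *: a + (1 - t) *: b) = t * slack i a + (1 - t) * slack i b.
Proof. by rewrite /slack dotDl !dotZl; lra. Qed.

Lemma Delta_convex (a b : pt) t : Dl a -> Dl b -> 0 <= t -> t <= 1 ->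
  Dl (t *: a + (1 - t) *: b).
Proof.
move=> Da Db t0 t1 i; rewrite -/(slack i _) slack_convex.
have := Da i; have := Db i; rewrite -!/(slack i _) => ? ?.
by apply: addr_ge0; apply: mulr_ge0 => //; lra.
Qed.

Lemma orthN u S : orth u S -> orth (- u) S.
Proof. by move=> uS i /uS; rewrite dotNl => ->; rewrite oppr0. Qed.

Lemma orth_tight_sub (x z : pt) (S : {set 'I_m}) : S \subset tight x ->
  (forall i, i \in S -> slack i z = 0) -> orth (z - x) S.
Proof.
move=> /subsetP Sx Sz i iS; rewrite dotBl.
by have := Sz i iS; have := Sx i iS; rewrite in_tight => /eqP; rewrite /slack; lra.
Qed.

Hypothesis bounded : exists M : R, forall x, Dl x -> forall j, `|x 0 j| <= M.

(* A bounded polyhedron has no recession direction. *)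
Lemma exists_dot_lt0 (x u : pt) : Dl x -> u != 0 -> exists j, dot u (lam j) < 0.
Proof.
move=> Dx un0; apply: NNPP => no_j; have [M HM] := bounded.
have /rV0Pn [k uk] := un0; have uk0 : 0 < `|u 0 k| by rewrite normr_gt0.
have xM := HM x Dx k; have := normr_ge0 (x 0 k) => x0.
pose s := (M + `|x 0 k| + 1) / `|u 0 k|.
have s0 : 0 <= s by apply: divr_ge0; lra.
have Dy : Dl (x + s *: u).
  move=> i; rewrite -/(slack i _) slack_translate; apply: addr_ge0; first exact: Dx.
  by apply: mulr_ge0 => //; rewrite leNgt; apply/negP => ui; apply: no_j; exists i.
have := HM _ Dy k; rewrite !mxE.
have := lerB_normD (s * u 0 k) (x 0 k).
by rewrite normrM (ger0_norm s0) /s mulfVK ?gt_eqF // addrC; lra.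
Qed.

Lemma step_to_facet (x u : pt) : Dl x -> u != 0 -> orth u (tight x) ->
  exists s, [/\ 0 < s, Dl (x + s *: u) & tight x \proper tight (x + s *: u)].
Proof.
move=> Dx un0 ux; have [j0 uj0] := exists_dot_lt0 Dx un0.
pose r j := slack j x / (- dot u (lam j)).
have [j uj min_j] := @arg_minP _ R _ j0 [pred j | dot u (lam j) < 0] r uj0.
have uj' : dot u (lam j) < 0 := uj.
have xj : 0 < slack j x.
  rewrite lt0r Dx andbT; apply/negP => /eqP xj0.
  have /ux uj0' : j \in tight x by rewrite in_tight xj0.
  by move: uj'; rewrite uj0' ltxx.
exists (r j); split; first by apply: divr_gt0; rewrite ?oppr_gt0.
  move=> i; rewrite -/(slack i _) slack_translate; have := Dx i; rewrite -/(slack i x).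
  case: (ltP (dot u (lam i)) 0) => ui xi.
    by have := min_j i ui; rewrite /r ler_pdivlMr ?oppr_gt0 // mulrN; lra.
  have rj : 0 <= r j by apply: divr_ge0; rewrite ?oppr_ge0 ?ltW.
  by apply: addr_ge0 => //; apply: mulr_ge0.
rewrite properEneq; apply/andP; split.
  apply/negP => /eqP E.
  have : j \in tight (x + r j *: u).
    by rewrite in_tight slack_translate /r invrN mulrN mulNr divfK ?subrr // lt_eqF.
  by rewrite -E in_tight gt_eqF.
apply/subsetP => i; rewrite !in_tight slack_translate => /eqP xi.
by rewrite ux ?in_tight ?xi // mulr0 addr0.
Qed.

Lemma vertex_of_orth_trivial x : Dl x -> (forall u, orth u (tight x) -> u = 0) ->
  vertex lam eta x.
Proof.
move=> Dx orth0; split => // a b t Da Db t0 t1 E; apply/eqP; rewrite -subr_eq0.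
apply/eqP/orth0 => i; rewrite in_tight => /eqP xi.
have := slack_convex i a b t; rewrite -E xi => e.
have := Da i; have := Db i; rewrite -!/(slack i _) => ? ?.
have /eqP : t * slack i a = 0.
  have : 0 <= t * slack i a by apply: mulr_ge0 => //; apply: ltW.
  have : 0 <= (1 - t) * slack i b by apply: mulr_ge0 => //; lra.
  lra.
rewrite mulf_eq0 gt_eqF //= => /eqP.
by rewrite dotBl; move: xi; rewrite /slack; lra.
Qed.

(* A direction orthogonal to the tight normals at v can be followed both ways,
   exhibiting v as an interior point of a segment in Delta. *)
Lemma vertex_orth_trivial v u : vertex lam eta v -> orth u (tight v) -> u = 0.
Proof.
move=> [Dv V] uv; apply/eqP; apply: contraT => un0.
have Nun0 : - u != 0 by rewrite oppr_eq0.
have [s1 [s10 D1 _]] := step_to_facet Dv un0 uv.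
have [s2 [s20 D2 _]] := step_to_facet Dv Nun0 (orthN uv).
pose t := s2 / (s1 + s2).
have t0 : 0 < t by apply: divr_gt0; lra.
have t1 : t < 1 by rewrite ltr_pdivrMr; lra.
have E : v = t *: (v + s1 *: u) + (1 - t) *: (v + s2 *: - u).
  rewrite !scalerDr !scalerA addrACA -scalerDl scalerN -scalerBl.
  have -> : t + (1 - t) = 1 by lra.
  have -> : t * s1 - (1 - t) * s2 = 0 by rewrite /t; field; rewrite gt_eqF //; lra.
  by rewrite scale1r scale0r addr0.
have /eqP := V _ _ _ D1 D2 t0 t1 E.
by rewrite -subr_eq0 addrC addKr scaler_eq0 gt_eqF //= (negbTE un0).
Qed.

Lemma vertexVorth x : Dl x ->
  vertex lam eta x \/ exists2 u, u != 0 & orth u (tight x).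
Proof.
move=> Dx; case: (classic (exists2 u, u != 0 & orth u (tight x))) => [|no_u]; first by right.
left; apply: vertex_of_orth_trivial => // u ux; apply/eqP; apply: contraT => un0.
by case: no_u; exists u.
Qed.

Lemma vertex_tight_unique v z : vertex lam eta v ->
  (forall i, i \in tight v -> slack i z = 0) -> z = v.
Proof.
move=> V vz; apply/eqP; rewrite -subr_eq0; apply/eqP.
exact: vertex_orth_trivial V (orth_tight_sub (subxx _) vz).
Qed.

(* Moving along a tight-orthogonal direction on which g does not increase,
   the tight set grows strictly; after finitely many steps we reach a vertex. *)
Lemma descend_to_vertex (g : pt) x : Dl x ->
  exists v, [/\ vertex lam eta v, tight x \subset tight v & dot v g <= dot x g].
Proof.
move: {2}#|~: tight x| (leqnn #|~: tight x|) => k; elim: k x => [|k IH] x lek Dx;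
  case: (vertexVorth Dx) => [V|[u un0 ux]]; try by exists x.
- have [s [_ _ Pr]] := step_to_facet Dx un0 ux.
  have := proper_card (introT idP (etrans (properC _ _) Pr)).
  by move: lek; rewrite leqn0 => /eqP ->.
wlog ug : u un0 ux / dot u g <= 0.
  move=> W; case: (leP (dot u g) 0) => ug; first exact: (W u).
  by apply: (W (- u)); rewrite ?oppr_eq0 ?dotNl ?oppr_le0 ?ltW //; apply: orthN.
have [s [s0 Dy Pr]] := step_to_facet Dx un0 ux.
have lt := proper_card (introT idP (etrans (properC _ _) Pr)).
have [|v [Vv Tv dv]] := IH (x + s *: u) _ Dy; first by rewrite -ltnS (leq_trans lt).
exists v; split => //; first exact: subset_trans (proper_sub Pr) Tv.
apply: le_trans dv _; rewrite dotDl dotZl.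
have : s * dot u g <= 0 by apply: mulr_ge0_le0 => //; apply: ltW.
lra.
Qed.
End Polytope.

Section Cut.
Variables (R : realType) (n m : nat) (lam : 'I_m -> 'rV[R]_n) (eta : 'I_m -> R)
          (lam0 : 'rV[R]_n) (xi : R).
Local Notation pt := 'rV[R]_n.
Local Notation Dl := (Delta lam eta).
Local Notation tight := (tight lam eta).
Local Notation orth := (orth lam).
Local Notation Kp := (Kpm lam eta lam0 xi true).
Local Notation Km := (Kpm lam eta lam0 xi false).
Local Notation KD := (KDelta lam eta lam0 xi).
Local Notation Z := (Zcut lam eta lam0 xi).
Local Notation W := (cinter Kp KD).
Implicit Types (s t : {set option 'I_m}) (x y z v : pt).

Definition cutval (x : pt) := dot x lam0 + xi.

Definition ctight (x : pt) : {set option 'I_m} :=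
  [set i | if i is Some j then j \in tight x else cutval x == 0].

Lemma ctight_Some j x : (Some j \in ctight x) = (j \in tight x).
Proof. by rewrite inE. Qed.

Lemma ctight_None x : (None \in ctight x) = (cutval x == 0).
Proof. by rewrite inE. Qed.

Lemma Some_in_imset j (A : {set 'I_m}) : (Some j \in Some @: A) = (j \in A).
Proof. exact: mem_imset Some_inj. Qed.

Lemma None_in_imset (A : {set 'I_m}) : (None \in Some @: A) = false.
Proof. by apply/imsetP => -[]. Qed.

Lemma imset_Some_proper (A B : {set 'I_m}) : A \proper B -> Some @: A \proper Some @: B.
Proof. by move=> AB; apply: imset_proper => // a b _ _; exact: Some_inj. Qed.

Lemma imset_Some_sub_ctight (A : {set 'I_m}) x :
  (Some @: A \subset ctight x) = (A \subset tight x).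
Proof.
apply/subsetP/subsetP => sub i.
  by move=> iA; rewrite -ctight_Some sub ?Some_in_imset.
by case: i => [j|]; rewrite ?Some_in_imset ?None_in_imset // ctight_Some => /sub.
Qed.

Lemma sub_imset_Some s x : None \notin s ->
  s \subset ctight x -> s \subset Some @: tight x.
Proof.
move=> Ns /subsetP sx; apply/subsetP => -[j|] js; last by rewrite js in Ns.
by rewrite Some_in_imset -ctight_Some sx.
Qed.

Lemma card_ctight x : #|ctight x| = (#|tight x| + (cutval x == 0%R))%N.
Proof.
have -> : ctight x =
    if cutval x == 0 then None |: Some @: tight x else Some @: tight x.
  by apply/setP => -[j|]; case: ifP => x0;
    rewrite ?inE ?Some_in_imset ?None_in_imset ?x0 //= in_tight.
case: (cutval x == 0); last by rewrite card_imset ?addn0 //; exact: Some_inj.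
by rewrite cardsU1 None_in_imset card_imset 1?addnC //; exact: Some_inj.
Qed.

Lemma ctight_proper x y : tight x \proper tight y -> (cutval x = 0 -> cutval y = 0) ->
  ctight x \proper ctight y.
Proof.
move=> /properP [sub [j jy jx]] xy; apply/properP.
split; last by exists (Some j); rewrite ctight_Some.
apply/subsetP => -[k|]; rewrite ?ctight_Some ?ctight_None; first exact: (subsetP sub).
by move/eqP/xy => ->.
Qed.

Lemma hyp_ctight i x : hyp lam eta lam0 xi i x <-> i \in ctight x.
Proof.
by case: i => [j|]; rewrite ?ctight_Some ?ctight_None ?in_tight /= /cutval /hypm /slack;
  split => [->|/eqP].
Qed.

Lemma hyps_ctight s x :
  (forall i, i \in s -> hyp lam eta lam0 xi i x) <-> s \subset ctight x.
Proof.
split => [sx|/subsetP sx i /sx]; last exact: (proj2 (hyp_ctight i x)).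
by apply/subsetP => i /sx; exact: (proj1 (hyp_ctight i x)).
Qed.

Lemma Kpm_ctight b s : Kpm lam eta lam0 xi b s <-> s = set0 \/
  exists x, [/\ Dl x, (if b then 0 <= cutval x else cutval x <= 0) & s \subset ctight x].
Proof.
have facets_ctight x : Dl x ->
    (forall i, i \in s -> facet lam eta lam0 xi i x) <-> s \subset ctight x.
  by move=> Dx; rewrite -hyps_ctight; split => sx i /sx // [].
split.
  case=> [->|[x [[Dx bx] sx]]]; first by left.
  by right; exists x; split => //; apply/facets_ctight.
case=> [->|[x [Dx bx sx]]]; first by left.
by right; exists x; split => //; apply/facets_ctight.
Qed.

Lemma KDelta_ctight s : KD s <->
  None \notin s /\ (s = set0 \/ exists2 x, Dl x & s \subset ctight x).
Proof.
split.
  case=> Ns [->|[x sx]]; first by split; [rewrite in_set0 | left].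
  split => //; case: (set_0Vmem s) => [->|[i /[dup] /sx [Dx _] _]]; [by left | right].
  by exists x => //; apply/hyps_ctight => j /sx [].
case=> Ns [->|[x Dx sx]]; first by split; [rewrite in_set0 | left].
by split => //; right; exists x => i /(proj2 (hyps_ctight s x) sx).
Qed.

Lemma Zcut_ctight s : Z s <->
  (exists2 x, Dl x & s \subset ctight x) /\
  (forall x, Dl x -> s \subset ctight x -> 0 < cutval x).
Proof.
have FsigE x : Fsig lam eta lam0 xi s x <-> Dl x /\ s \subset ctight x.
  by split => -[Dx sx]; split => //; apply/hyps_ctight.
split.
  case=> [[x /FsigE [Dx sx]] Zpos]; split; first by exists x.
  move=> y Dy sy; have [[_ y0] ny] := Zpos y (proj2 (FsigE y) (conj Dy sy)).
  by rewrite lt_neqAle y0 andbT; apply: contra_notN ny => /eqP y0'; split.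
case=> [[x Dx sx] Zpos]; split; first by exists x; apply/FsigE.
move=> y /FsigE [Dy sy]; have := Zpos y Dy sy => y0.
by split; [split => //; apply: ltW | move=> [_ /= y0']; move: y0; rewrite /cutval y0' ltxx].
Qed.

Lemma cutval_translate x u (s : R) : cutval (x + s *: u) = cutval x + s * dot u lam0.
Proof. by rewrite /cutval dotDl dotZl; lra. Qed.

Lemma cutval_convex (a b : pt) (t : R) :
  cutval (t *: a + (1 - t) *: b) = t * cutval a + (1 - t) * cutval b.
Proof. by rewrite /cutval dotDl !dotZl; lra. Qed.

Lemma exists_cut_point s x y : Dl x -> Dl y ->
  0 <= cutval x -> cutval y <= 0 -> None \notin s ->
  s \subset ctight x -> s \subset ctight y ->
  exists z, [/\ Dl z, cutval z = 0 & s \subset ctight z].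
Proof.
move=> Dx Dy x0 y0 Ns /subsetP sx /subsetP sy.
have [x0'|xn0] := eqVneq (cutval x) 0; first by exists x; split => //; apply/subsetP.
have {xn0}x0 : 0 < cutval x by rewrite lt_neqAle eq_sym xn0.
pose t := cutval x / (cutval x - cutval y).
exists (t *: y + (1 - t) *: x); split.
- by apply: Delta_convex => //; [apply: divr_ge0 | rewrite ler_pdivrMr]; lra.
- by rewrite cutval_convex /t; field; rewrite gt_eqF //; lra.
apply/subsetP => -[j|] js; last by rewrite js in Ns.
move: (sx _ js) (sy _ js); rewrite !ctight_Some !in_tight slack_convex => /eqP-> /eqP->.
by rewrite !mulr0 addr0.
Qed.

Lemma n_le_card_tight_add1 x :
  (forall u, orth u (tight x) -> dot u lam0 = 0 -> u = 0) -> (n <= #|tight x| + 1)%N.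
Proof.
move=> orth0; pose w (i : 'I_(#|tight x| + 1)) : pt :=
  if split i is inl a then lam (enum_val a) else lam0.
apply: (dim_le_of_orthogonal_trivial (w := w)) => u uw; apply: orth0.
  move=> j jx; have := uw (unsplit (inl (enum_rank_in jx j))).
  by rewrite /w unsplitK (enum_rankK_in jx jx).
by have := uw (unsplit (inr ord0)); rewrite /w unsplitK.
Qed.

Lemma maximal_face_proper (K : complex (option 'I_m)) s t :
  maximal_face K s -> K t -> ~ s \proper t.
Proof. by move=> [_ smax] Kt /[dup] /proper_sub /(smax t Kt) ->; rewrite properxx. Qed.

Hypothesis SP : simple_polytope lam eta.
Hypothesis GC : generic_cut lam eta lam0 xi.

Lemma bounded_Delta : exists M : R, forall x, Dl x -> forall j, `|x 0 j| <= M.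
Proof. by case: SP. Qed.

Lemma card_tight_vertex v : vertex lam eta v -> #|tight v| = n.
Proof.
move=> V; case: SP => _ _ _ _ /(_ v V) [S [cardS vS]].
by rewrite -[RHS]cardS; apply: eq_card => i; rewrite in_tight; apply/eqP/idP => /vS.
Qed.

Lemma exists_cut_facet_point : exists2 h, Dl h & cutval h = 0.
Proof. by case: GC => _ _ [h [Dh h0]]; exists h. Qed.

(* Genericity: a point that is the only solution of its own facet equations
   cannot lie on the cut hyperplane. *)
Lemma cutval_neq0_of_orth_trivial (S : {set 'I_m}) x : Dl x -> S \subset tight x ->
  (forall u, orth u S -> u = 0) -> cutval x != 0.
Proof.
move=> Dx Sx orth0; case: GC => _ generic _.
have xS : Lsub lam eta S x by move=> i /(subsetP Sx); rewrite in_tight => /eqP.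
have LS : affdim (Lsub lam eta S) 0.
  apply: (affdim_singleton (p := x)) => z; split => [zS|->] //.
  apply/eqP; rewrite -subr_eq0; apply/eqP/orth0.
  by apply: orth_tight_sub Sx _ => i /zS.
apply/eqP => x0; have /= := generic S 0 (ex_intro _ x xS) LS x.
by move/(_ (conj xS x0)).
Qed.

Lemma cutval_vertex_neq0 v : vertex lam eta v -> cutval v != 0.
Proof.
move=> V; apply: (cutval_neq0_of_orth_trivial _ (subxx (tight v))); first by case: V.
by move=> u; exact: (vertex_orth_trivial bounded_Delta V).
Qed.

Lemma Zcut_cutval_gt0 s x : Z s -> Dl x -> s \subset ctight x -> 0 < cutval x.
Proof. by case/Zcut_ctight => _; apply. Qed.

Lemma not_Zcut_set0 : ~ Z set0.
Proof.
move=> Z0; have [h Dh h0] := exists_cut_facet_point.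
by have := Zcut_cutval_gt0 Z0 Dh (sub0set _); rewrite h0 ltxx.
Qed.

Lemma inter_of_cutval_gt0 s x : Dl x -> 0 < cutval x -> s \subset ctight x -> W s.
Proof.
move=> Dx x0 sx; have Ns : None \notin s.
  by apply: contraTN x0 => /(subsetP sx); rewrite ctight_None => /eqP->; rewrite ltxx.
split; first by apply/Kpm_ctight; right; exists x; split => //; apply: ltW.
by apply/KDelta_ctight; split => //; right; exists x.
Qed.

Lemma union_face_realized s : cunion Kp KD s ->
  s = set0 \/ exists2 x, Dl x & s \subset ctight x.
Proof.
by case=> [/Kpm_ctight [->|[x [Dx _ sx]]] | /KDelta_ctight [_ [->|[x Dx sx]]]];
  [left | right; exists x | left | right; exists x].
Qed.

Lemma star_Zcut_inter s : starO (cunion Kp KD) Z s -> W s.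
Proof.
move=> [Ks [t [Zt ts]]]; case: (union_face_realized Ks) => [s0|[x Dx sx]].
  by move: ts; rewrite s0 subset0 => /eqP t0; move: Zt; rewrite t0 => /not_Zcut_set0.
exact: inter_of_cutval_gt0 Dx (Zcut_cutval_gt0 Zt Dx (subset_trans ts sx)) sx.
Qed.

Lemma Zcut_inter s : Z s -> W s.
Proof.
move=> Zs; apply: star_Zcut_inter; have [[x Dx sx] _] := proj1 (Zcut_ctight s) Zs.
split; last by exists s.
by left; apply/Kpm_ctight; right; exists x; split => //; apply: ltW (Zcut_cutval_gt0 Zs Dx sx).
Qed.

Lemma Kminus_Del s : Km s <-> Del Z (cunion Kp KD) s.
Proof.
split.
  move/Kpm_ctight => [->|[x [Dx x0 sx]]].
    split; first by left; apply/Kpm_ctight; left.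
    by move=> [_ [t [Zt]]]; rewrite subset0 => /eqP t0; move: Zt; rewrite t0 => /not_Zcut_set0.
  split; last first.
    by move=> [_ [t [Zt ts]]]; have := Zcut_cutval_gt0 Zt Dx (subset_trans ts sx); lra.
  have [x0'|xn0] := eqVneq (cutval x) 0.
    by left; apply/Kpm_ctight; right; exists x; split => //; rewrite x0'.
  right; apply/KDelta_ctight; split; last by right; exists x.
  by apply: contraNN xn0 => /(subsetP sx); rewrite ctight_None.
move=> [Ks notZ]; case: (union_face_realized Ks) => [->|[x Dx sx]].
  by apply/Kpm_ctight; left.
apply/Kpm_ctight; right; apply: NNPP => no_y; apply: notZ; split => //; exists s; split => //.
apply/Zcut_ctight; split; first by exists x.
by move=> y Dy sy; rewrite ltNge; apply/negP => y0; apply: no_y; exists y.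
Qed.

Lemma Zcut_not_closure_diff (K : complex (option 'I_m)) s :
  (forall t, K t -> cunion Kp KD t) -> Z s -> ~ Defs.closure (cdiff K W) s.
Proof.
move=> KU Zs [s0|[t [[Kt nWt] st]]]; first by move: Zs; rewrite s0 => /not_Zcut_set0.
by apply: nWt; apply: star_Zcut_inter; split; [exact: KU | exists s].
Qed.

Lemma cut_face_in_Kplus_diff s z : Dl z -> cutval z = 0 -> s \subset ctight z ->
  cdiff Kp W (None |: s).
Proof.
move=> Dz z0 sz; split; last by move=> [_ /KDelta_ctight [/negP + _]]; rewrite setU11.
apply/Kpm_ctight; right; exists z; split => //; first by rewrite z0.
by rewrite subUset sub1set ctight_None z0 eqxx.
Qed.

Lemma KDelta_tight y : Dl y -> KD (Some @: tight y).
Proof.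
move=> Dy; apply/KDelta_ctight; rewrite None_in_imset; split => //.
by right; exists y; rewrite ?imset_Some_sub_ctight.
Qed.

(* A vertex is the only point of Delta on its facets, so if it lies below
   the cut these facets do not meet Delta_+. *)
Lemma vertex_face_in_KDelta_diff v : vertex lam eta v -> cutval v < 0 ->
  tight v != set0 -> cdiff KD W (Some @: tight v).
Proof.
move=> V v0 vn0; split; first by apply: KDelta_tight; case: V.
move=> [/Kpm_ctight [s0|[z [Dz z0 vz]]] _].
  by move/eqP: s0; rewrite imset_eq0 (negbTE vn0).
suff zv : z = v by move: z0; rewrite zv; lra.
apply: (vertex_tight_unique bounded_Delta V) => i iv; apply/eqP; rewrite -in_tight.
by move: vz; rewrite imset_Some_sub_ctight => /subsetP; apply.
Qed.

Lemma Zcut_Kplus_closure s : Z s <-> W s /\ ~ Defs.closure (cdiff Kp W) s.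
Proof.
split=> [Zs|[[Kps KDs] notcl]].
  by split; [exact: Zcut_inter | apply: Zcut_not_closure_diff Zs => t Kt; left].
case/Kpm_ctight: (Kps) => [s0|[x [Dx x0 sx]]]; first by case: notcl; left.
have [Ns _] := proj1 (KDelta_ctight s) KDs.
apply/Zcut_ctight; split; first by exists x.
move=> y Dy sy; rewrite ltNge; apply/negP => y0; apply: notcl; right.
have [z [Dz z0 sz]] := exists_cut_point Dx Dy x0 y0 Ns sx sy.
by exists (None |: s); split; [exact: cut_face_in_Kplus_diff z0 sz | exact: subsetUr].
Qed.

Lemma Zcut_KDelta_closure s : Z s <-> W s /\ ~ Defs.closure (cdiff KD W) s.
Proof.
split=> [Zs|[[Kps KDs] notcl]].
  by split; [exact: Zcut_inter | apply: Zcut_not_closure_diff Zs => t Kt; right].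
case/Kpm_ctight: (Kps) => [s0|[x [Dx x0 sx]]]; first by case: notcl; left.
have [Ns _] := proj1 (KDelta_ctight s) KDs.
apply/Zcut_ctight; split; first by exists x.
move=> y Dy sy; rewrite ltNge; apply/negP => y0.
have [v [V yv vy]] := descend_to_vertex bounded_Delta lam0 Dy.
have v0 : cutval v < 0.
  by rewrite lt_neqAle cutval_vertex_neq0 //=; move: vy y0; rewrite /cutval; lra.
have sv : s \subset Some @: tight v.
  exact: subset_trans (sub_imset_Some Ns sy) (imsetS _ yv).
have vn0 : tight v != set0.
  by apply/eqP => v_0; apply: (notcl); left; apply/eqP; move: sv; rewrite v_0 imset0 subset0.
apply: notcl; right; exists (Some @: tight v).
by split; first exact: vertex_face_in_KDelta_diff.
Qed.

Lemma ascend_from_nonvertex x : Dl x -> ~ vertex lam eta x ->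
  exists y, [/\ Dl y, tight x \proper tight y & cutval x <= cutval y].
Proof.
move=> Dx nV; case: (vertexVorth Dx) => [//|[u un0 ux]].
wlog u0 : u un0 ux / 0 <= dot u lam0.
  move=> W; case: (leP 0 (dot u lam0)) => u0; first exact: (W u).
  by apply: (W (- u)); rewrite ?oppr_eq0 ?dotNl ?oppr_ge0 ?ltW //; apply: orthN.
have [s [s0 Dy Pr]] := step_to_facet bounded_Delta Dx un0 ux.
exists (x + s *: u); split => //; rewrite cutval_translate.
have : 0 <= s * dot u lam0 by apply: mulr_ge0 => //; apply: ltW.
lra.
Qed.

(* A maximal face of this shape is the facet set of a vertex: otherwise one can
   move to a point lying on strictly more facets without lowering the cut value. *)
Lemma card_maximal_tight_face (K : complex (option 'I_m)) c x : Dl x -> c <= cutval x ->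
  (forall y, Dl y -> c <= cutval y -> K (Some @: tight y)) ->
  maximal_face K (Some @: tight x) -> #|Some @: tight x| = n.
Proof.
move=> Dx cx Ktight Mx; case: (classic (vertex lam eta x)) => V.
  by rewrite card_imset ?card_tight_vertex //; exact: Some_inj.
have [y [Dy xy cxy]] := ascend_from_nonvertex Dx V.
by case: (maximal_face_proper Mx (Ktight y Dy (le_trans cx cxy))); apply: imset_Some_proper.
Qed.

Lemma Kplus_realized s : Kp s -> exists x, [/\ Dl x, 0 <= cutval x & s \subset ctight x].
Proof.
case/Kpm_ctight => [->|//]; have [h Dh h0] := exists_cut_facet_point.
by exists h; split; rewrite ?h0 ?sub0set.
Qed.

Lemma pure_KDelta : pure_card KD n.
Proof.
move=> s Ms; have [Ns sx] := proj1 (KDelta_ctight s) (proj1 Ms).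
have [x Dx {}sx] : exists2 x, Dl x & s \subset ctight x.
  by case: sx => [->|//]; have [h Dh _] := exists_cut_facet_point; exists h; rewrite ?sub0set.
have sx' : Some @: tight x = s.
  by apply: (proj2 Ms); [exact: KDelta_tight | exact: sub_imset_Some].
rewrite -sx' in Ms *.
by apply: (card_maximal_tight_face Dx (lexx _)) Ms => y Dy _; apply: KDelta_tight.
Qed.

Lemma pure_inter : pure_card W n.
Proof.
move=> s Ms; have [[Kps KDs] _] := Ms; have [Ns _] := proj1 (KDelta_ctight s) KDs.
have [x [Dx x0 sx]] := Kplus_realized Kps.
have Wtight y : Dl y -> 0 <= cutval y -> W (Some @: tight y).
  move=> Dy y0; split; last exact: KDelta_tight.
  by apply/Kpm_ctight; right; exists y; rewrite ?imset_Some_sub_ctight.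
have sx' : Some @: tight x = s by apply: (proj2 Ms); [exact: Wtight | exact: sub_imset_Some].
by rewrite -sx' in Ms *; exact: card_maximal_tight_face Dx x0 Wtight Ms.
Qed.

(* The hypothesis makes the directions orthogonal to the tight normals a line
   transverse to the cut; following it reaches a vertex on one more facet. *)
Lemma card_tight_add1_le x : Dl x -> cutval x = 0 ->
  (forall u, orth u (tight x) -> dot u lam0 = 0 -> u = 0) -> (#|tight x| + 1 <= n)%N.
Proof.
move=> Dx x0 orth0.
have [u un0 ux] : exists2 u, u != 0 & orth u (tight x).
  case: (vertexVorth Dx) => [V|//].
  by move: (cutval_vertex_neq0 V); rewrite x0 eqxx.
have u0 : dot u lam0 != 0 by apply: contraNneq un0 => /(orth0 u ux) ->.
have [s [_ Dy Pr]] := step_to_facet bounded_Delta Dx un0 ux.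
have [_ [j jy jx]] := properP Pr.
suff Vy : vertex lam eta (x + s *: u).
  by rewrite addn1 -[X in (_ <= X)%N](card_tight_vertex Vy) proper_card.
apply: (vertex_of_orth_trivial Dy) => w wy.
have wx : orth w (tight x) by move=> i ix; apply: wy; apply: (subsetP (proper_sub Pr)).
pose c := dot u lam0 *: w - dot w lam0 *: u.
have c0 : c = 0.
  apply: orth0 => [i ix|]; rewrite /c dotBl !dotZl ?(wx i ix) ?(ux i ix); lra.
have uj : dot u (lam j) != 0.
  apply: contraNneq jx => uj; move: jy; rewrite !in_tight slack_translate uj.
  by rewrite mulr0 addr0.
have /eqP : dot c (lam j) = 0 by rewrite c0 dot0l.
rewrite /c dotBl !dotZl (wy j jy) mulr0 sub0r oppr_eq0 mulf_eq0 (negbTE uj) orbF.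
move=> /eqP w0; move: c0; rewrite /c w0 scale0r subr0 => /eqP.
by rewrite scaler_eq0 (negbTE u0) => /eqP.
Qed.

Lemma pure_Kplus : pure_card Kp n.
Proof.
move=> s Ms; have [x [Dx x0 sx]] := Kplus_realized (proj1 Ms).
have Kptight y : Dl y -> 0 <= cutval y -> Kp (ctight y).
  by move=> Dy y0; apply/Kpm_ctight; right; exists y.
have sx' : ctight x = s by apply: (proj2 Ms) => //; exact: Kptight.
rewrite -sx' in Ms *; rewrite card_ctight.
have [x0'|xn0] := eqVneq (cutval x) 0; last first.
  rewrite addn0; case: (classic (vertex lam eta x)) => [|V]; first exact: card_tight_vertex.
  have [y [Dy xy cxy]] := ascend_from_nonvertex Dx V.
  case: (maximal_face_proper Ms (Kptight y Dy (le_trans x0 cxy))).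
  by apply: ctight_proper => // x0'; rewrite x0' eqxx in xn0.
have orth0 u : orth u (tight x) -> dot u lam0 = 0 -> u = 0.
  move=> ux u0; apply/eqP; apply: contraT => un0.
  have [t [_ Dy Pr]] := step_to_facet bounded_Delta Dx un0 ux.
  have y0 : cutval (x + t *: u) = 0 by rewrite cutval_translate u0 mulr0 addr0.
  case: (maximal_face_proper Ms (Kptight _ Dy _)); first by rewrite y0.
  exact: ctight_proper.
apply/eqP; rewrite eqn_leq n_le_card_tight_add1 // andbT.
exact: card_tight_add1_le.
Qed.

Lemma strong_connected_sum_cut : strong_connected_sum Kp KD Z Km.
Proof.
split.
- split; [exact: Zcut_inter | exact: not_Zcut_set0 | exact: star_Zcut_inter |].
  exact: Kminus_Del.
- by exists n; split; [exact: pure_Kplus | exact: pure_KDelta | exact: pure_inter].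
- exact: Zcut_Kplus_closure.
- exact: Zcut_KDelta_closure.
Qed.
End Cut.

Theorem theorem3p12 (R : realType) (n m : nat)
  (lam : 'I_m -> 'rV[R]_n) (eta : 'I_m -> R) (lam0 : 'rV[R]_n) (xi : R) :
  simple_polytope lam eta ->
  generic_cut lam eta lam0 xi ->
  strong_connected_sum (Kpm lam eta lam0 xi true) (KDelta lam eta lam0 xi)
    (Zcut lam eta lam0 xi) (Kpm lam eta lam0 xi false).
Proof. exact: strong_connected_sum_cut. Qed.
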